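(* Let $N\in\mathbb{N}$ with $N\ge3$, $1\le m\le N+1$ an integer, and $n\in\mathbb{N}$ with $n>\frac{N+5}{96}$. Then there is a real $E$ with $|E|\le E^{[1]}_N n^{-\frac{N+2}{2}}$ such that \[ \lambda(n)^{-2m}=\frac{3^{m/2}}{\pi^m}\left(\sum_{\ell=0}^{R_N(m)}\binom{-\frac m2}{\ell}24^{-\ell}n^{-\ell-\frac m2}+E\right). \]
   Context: $\lambda(n):=\sqrt{\frac{\pi}{6\sqrt2}\sqrt{24n+1}}$; $R_N(m):=\lfloor\frac{N+1-m}{2}\rfloor$; $E^{[1]}_N:=\max_{1\le m\le N+1}\left|\binom{-m/2}{R_N(m)+1}\right|24^{-R_N(m)-1}$. *)

From Stdlib Require Import Reals List Arith.
Open Scope R_scope.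

Definition lambda (n : nat) : R :=
  sqrt (PI / (6 * sqrt 2) * sqrt (24 * INR n + 1)).

Fixpoint falling (a : R) (k : nat) : R :=
  match k with
  | O => 1
  | S k' => falling a k' * (a - INR k')
  end.
Definition gbinom (a : R) (k : nat) : R := falling a k / INR (Factorial.fact k).

(* R_N(m) = floor((N+1-m)/2); used only for 1 <= m <= N+1, where N+1-m >= 0,
   so natural-number truncated subtraction and division agree with the floor. *)
Definition RN (N m : nat) : nat := Nat.div (N + 1 - m) 2.

Definition E1bound_term (N m : nat) : R :=
  Rabs (gbinom (- INR m / 2) (S (RN N m))) * / (24 ^ (S (RN N m))).

(* E^{[1]}_N = max_{1 <= m <= N+1} E1bound_term N m  (the list seq 1 (N+1) = [1..N+1]
   is nonempty; all terms are >= 0, so folding Rmax from 0 gives the max) *)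
Definition E1bound (N : nat) : R :=
  fold_right Rmax 0 (map (E1bound_term N) (seq 1 (N + 1))).

(* Since [lambda n ^ 2 = PI / (6 sqrt 2) * sqrt (24 n + 1)] and [(6 sqrt 2)^2 = 3 * 24],
   [lambda n ^ (-2m) = 3^(m/2) / PI^m * n^(-m/2) * (1 + 1/(24 n))^(-m/2)].  Expanding
   [(1 + x)^a] with [a = -m/2 <= 0] by Taylor's formula to order [K = R_N(m)], the
   Lagrange remainder is [binom(a, K+1) x^(K+1) (1 + xi)^(a-K-1)] with [0 < xi], and the
   last factor is at most 1.  With [x = 1/(24 n)] the error is thus at most
   [E^[1]_N n^(-m/2-K-1)], and [m/2 + K + 1 >= (N+2)/2] by the choice of [K]. *)

From Stdlib Require Import Reals List Lra Lia.
From Coquelicot Require Import Coquelicot.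
Open Scope R_scope.

Lemma Rpower_1_l (y : R) : Rpower 1 y = 1.
Proof. unfold Rpower. rewrite ln_1, Rmult_0_r. apply exp_0. Qed.

Lemma Rpower_le_1 (x y : R) : 1 <= x -> y <= 0 -> Rpower x y <= 1.
Proof.
intros Hx Hy. rewrite <- (Rpower_O x) by lra. apply Rle_Rpower; lra.
Qed.

Lemma is_derive_n_Rpower_1plus (a : R) (k : nat) (t : R) : -1 < t ->
  is_derive_n (fun u => Rpower (1 + u) a) k t
    (falling a k * Rpower (1 + t) (a - INR k)).
Proof.
revert t; induction k as [|k IH]; intros t Ht.
- simpl. rewrite Rminus_0_r. ring.
- change (is_derive (Derive_n (fun u => Rpower (1 + u) a) k) t
    (falling a k * (a - INR k) * Rpower (1 + t) (a - INR (S k)))).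
  rewrite S_INR.
  apply is_derive_ext_loc with (f := fun u => falling a k * Rpower (1 + u) (a - INR k)).
  + apply (open_gt (-1)) in Ht. revert Ht. apply filter_imp. intros u Hu.
    symmetry. apply is_derive_n_unique, IH, Hu.
  + unfold Rpower. auto_derive; [lra|].
    replace ((a - INR k) * ln (1 + t)) with ((a - (INR k + 1)) * ln (1 + t) + ln (1 + t))
      by ring.
    rewrite exp_plus, exp_ln by lra. field. lra.
Qed.

Lemma Derive_n_Rpower_1plus (a : R) (k : nat) (t : R) : -1 < t ->
  Derive_n (fun u => Rpower (1 + u) a) k t = falling a k * Rpower (1 + t) (a - INR k).
Proof. intros Ht. exact (is_derive_n_unique _ _ _ _ (is_derive_n_Rpower_1plus a k t Ht)). Qed.

Lemma binomial_Taylor_nonpos (a : R) (K : nat) (x : R) : a <= 0 -> 0 < x ->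
  exists r, Rpower (1 + x) a = sum_f_R0 (fun l => gbinom a l * x ^ l) K + r /\
    Rabs r <= Rabs (gbinom a (S K)) * x ^ S K.
Proof.
intros Ha Hx.
destruct (Taylor_Lagrange (fun u => Rpower (1 + u) a) K 0 x Hx) as [xi [Hxi Heq]].
{ intros t Ht k _. destruct k as [|k]; [exact I|].
  eexists. apply (is_derive_n_Rpower_1plus a (S k)). lra. }
rewrite Rminus_0_r in Heq.
exists (x ^ S K / INR (Factorial.fact (S K)) * Derive_n (fun u => Rpower (1 + u) a) (S K) xi).
split.
- rewrite Heq. f_equal. apply sum_eq. intros l _.
  rewrite Derive_n_Rpower_1plus, Rplus_0_r, Rpower_1_l by lra.
  unfold gbinom. field. apply INR_fact_neq_0.
- rewrite Derive_n_Rpower_1plus by lra.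
  assert (Hpow : Rpower (1 + xi) (a - INR (S K)) <= 1).
  { apply Rpower_le_1; pose proof (pos_INR (S K)); lra. }
  assert (Hpos : 0 < Rpower (1 + xi) (a - INR (S K))) by apply exp_pos.
  assert (Hfact := INR_fact_lt_0 (S K)).
  assert (HxK := pow_lt x (S K) Hx).
  replace (x ^ S K / INR (Factorial.fact (S K)) * (falling a (S K) * Rpower (1 + xi) (a - INR (S K))))
    with (gbinom a (S K) * x ^ S K * Rpower (1 + xi) (a - INR (S K)))
    by (unfold gbinom; field; lra).
  rewrite !Rabs_mult, (Rabs_pos_eq (x ^ S K)), (Rabs_pos_eq (Rpower _ _)) by lra.
  rewrite <- (Rmult_1_r (Rabs (gbinom a (S K)) * x ^ S K)) at 2.
  apply Rmult_le_compat_l; [apply Rmult_le_pos; [apply Rabs_pos | lra] | exact Hpow].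
Qed.

Lemma ln_sqrt (x : R) : 0 < x -> ln (sqrt x) = ln x / 2.
Proof. intros Hx. rewrite <- Rpower_sqrt, ln_Rpower by exact Hx. field. Qed.

Lemma ln_lambda (n : nat) :
  ln (lambda n) = (ln PI - ln 6 - ln 2 / 2 + ln (24 * INR n + 1) / 2) / 2.
Proof.
assert (Hn := pos_INR n).
assert (Hpi := PI_RGT_0).
assert (H2 : 0 < sqrt 2) by (apply sqrt_lt_R0; lra).
assert (H24 : 0 < sqrt (24 * INR n + 1)) by (apply sqrt_lt_R0; lra).
assert (Hc : 0 < PI / (6 * sqrt 2)) by (apply Rdiv_lt_0_compat; lra).
assert (Hl : 0 < PI / (6 * sqrt 2) * sqrt (24 * INR n + 1)) by (apply Rmult_lt_0_compat; lra).
assert (Hinv : 0 < / (6 * sqrt 2)) by (apply Rinv_0_lt_compat; lra).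
unfold lambda, Rdiv in *.
rewrite ln_sqrt, !ln_mult, ln_Rinv, ln_mult, !ln_sqrt; lra.
Qed.

Lemma Rpower_lambda (m n : nat) : (1 <= n)%nat ->
  Rpower (lambda n) (- (2 * INR m)) =
  Rpower 3 (INR m / 2) / PI ^ m *
  (Rpower (INR n) (- INR m / 2) * Rpower (1 + / (24 * INR n)) (- INR m / 2)).
Proof.
intros Hn. assert (HnR := le_INR _ _ Hn); simpl INR in HnR.
assert (Hpi := PI_RGT_0).
rewrite <- (Rpower_pow m PI) by lra.
replace (Rpower 3 (INR m / 2) / Rpower PI (INR m))
  with (Rpower 3 (INR m / 2) * Rpower PI (- INR m)) by (rewrite Rpower_Ropp; reflexivity).
unfold Rpower; rewrite <- !exp_plus. f_equal.
replace (1 + / (24 * INR n)) with ((24 * INR n + 1) * / 24 * / INR n) by (field; lra).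
rewrite ln_lambda, !ln_mult, !ln_Rinv by (auto; try apply Rmult_lt_0_compat;
  try apply Rinv_0_lt_compat; lra).
replace 24 with (2 * 2 * 2 * 3) by ring. replace 6 with (2 * 3) by ring.
rewrite !ln_mult by lra. field.
Qed.

Lemma RN_spec (N m : nat) : (m <= N + 1)%nat -> (N <= 2 * RN N m + m)%nat.
Proof.
intros Hm. unfold RN.
pose proof (Nat.div_mod (N + 1 - m) 2). pose proof (Nat.mod_upper_bound (N + 1 - m) 2).
lia.
Qed.

Lemma fold_right_Rmax_ge (f : nat -> R) (l : list nat) (x : nat) :
  In x l -> f x <= fold_right Rmax 0 (map f l).
Proof.
induction l as [|y l IH]; simpl; intros Hx; [contradiction|].
destruct Hx as [<- | Hx]; [apply Rmax_l|].
eapply Rle_trans; [apply IH, Hx | apply Rmax_r].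
Qed.

Lemma E1bound_term_le (N m : nat) : (1 <= m <= N + 1)%nat -> E1bound_term N m <= E1bound N.
Proof. intros Hm. apply fold_right_Rmax_ge, in_seq. lia. Qed.

Lemma pow_inv_mult_Rpower (c x : R) (l : nat) : 0 < c -> 0 < x ->
  (/ (c * x)) ^ l = / c ^ l * Rpower x (- INR l).
Proof.
intros Hc Hx. rewrite Rpower_Ropp, Rpower_pow, pow_inv, Rpow_mult_distr by lra.
field. split; apply pow_nonzero; lra.
Qed.

Lemma E1bound_term_ge0 (N m : nat) : 0 <= E1bound_term N m.
Proof.
apply Rmult_le_pos; [apply Rabs_pos | apply Rlt_le, Rinv_0_lt_compat, pow_lt; lra].
Qed.

Lemma remainder_le_E1bound (N m n : nat) (r : R) : (1 <= m <= N + 1)%nat -> (1 <= n)%nat ->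
  Rabs r <= E1bound_term N m * Rpower (INR n) (- INR (S (RN N m))) ->
  Rabs (Rpower (INR n) (- INR m / 2) * r) <= E1bound N * Rpower (INR n) (- (INR N + 2) / 2).
Proof.
intros Hm Hn Hr. apply le_INR in Hn; simpl INR in Hn.
assert (HK := le_INR _ _ (RN_spec N m ltac:(lia))).
rewrite plus_INR, mult_INR in HK; simpl INR in HK.
rewrite Rabs_mult, (Rabs_pos_eq (Rpower _ _)) by apply Rlt_le, exp_pos.
apply Rle_trans with (E1bound_term N m * Rpower (INR n) (- INR m / 2 + - INR (S (RN N m)))).
- rewrite Rpower_plus.
  replace (E1bound_term N m * (Rpower (INR n) (- INR m / 2) * Rpower (INR n) (- INR (S (RN N m)))))
    with (Rpower (INR n) (- INR m / 2) * (E1bound_term N m * Rpower (INR n) (- INR (S (RN N m)))))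
    by ring.
  apply Rmult_le_compat_l; [apply Rlt_le, exp_pos | exact Hr].
- apply Rmult_le_compat; [apply E1bound_term_ge0 | apply Rlt_le, exp_pos | |].
  + exact (E1bound_term_le N m Hm).
  + apply Rle_Rpower; [lra|]. rewrite S_INR. lra.
Qed.

Theorem lemma3p15 (N m n : nat) :
  (3 <= N)%nat -> (1 <= m <= N + 1)%nat ->
  INR n > (INR N + 5) / 96 ->
  exists E : R,
    Rabs E <= E1bound N * Rpower (INR n) (- (INR N + 2) / 2) /\
    Rpower (lambda n) (- (2 * INR m)) =
      Rpower 3 (INR m / 2) / PI ^ m *
      (sum_f_R0 (fun l => gbinom (- INR m / 2) l * / (24 ^ l) *
                          Rpower (INR n) (- INR l - INR m / 2)) (RN N m)
       + E).
Proof.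
intros _ Hm Hn.
assert (Hn1 : (1 <= n)%nat).
{ destruct n; [simpl in Hn; pose proof (pos_INR N); lra | lia]. }
assert (HnR := le_INR _ _ Hn1); simpl INR in HnR.
set (a := - INR m / 2). set (K := RN N m).
assert (Hx : 0 < / (24 * INR n)) by (apply Rinv_0_lt_compat; lra).
assert (Ha : a <= 0) by (unfold a; pose proof (pos_INR m); lra).
destruct (binomial_Taylor_nonpos a K _ Ha Hx) as [r [Hr Hrb]].
rewrite pow_inv_mult_Rpower, <- Rmult_assoc in Hrb by lra.
exists (Rpower (INR n) a * r). split.
- exact (remainder_le_E1bound N m n r Hm Hn1 Hrb).
- rewrite Rpower_lambda by exact Hn1. fold a. rewrite Hr. f_equal.
  rewrite Rmult_plus_distr_l, scal_sum. f_equal. apply sum_eq. intros l _.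
  rewrite pow_inv_mult_Rpower by lra.
  replace (- INR l - INR m / 2) with (a + - INR l) by (unfold a; field).
  rewrite Rpower_plus. ring.
Qed.
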